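(* Let $X$ be a real Banach space. The following statements are equivalent. (1) $X$ is rotund. (2) $r(Q_{B_X}(x_1),Q_{B_X}(x_2))=\|x_1-x_2\|$ for every $x_1,x_2\in S_X$. (3) $r(Q_{S_X}(x_1),Q_{S_X}(x_2))=\|x_1-x_2\|$ for every $x_1,x_2\in S_X$. (4) $r(Q_{S_X}(x_1),Q_{S_X}(x_2))=\|x_1-x_2\|$ for every $x_1,x_2\in S_X$ with $x_1\neq x_2$.
   Context: $B_X$ and $S_X$ denote the closed unit ball and unit sphere of $X$. For a non-empty bounded $F\subseteq X$ and $x\in X$, $r(F,x)=\sup\{\|x-y\|:y\in F\}$ and $Q_F(x)=\{y\in F:\|x-y\|=r(F,x)\}$. For non-empty bounded sets $A,B$, the generalized diameter is $r(A,B)=\sup\{\|a-b\|:a\in A,b\in B\}$. $X$ is rotund if $\|\frac{x_1+x_2}{2}\|<1$ whenever $x_1,x_2\in S_X$, $x_1\neq x_2$. *)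

From HB Require Import structures.
From mathcomp Require Import all_boot all_order all_algebra.
From mathcomp Require Import all_classical all_reals all_analysis.
Set Implicit Arguments. Unset Strict Implicit. Unset Printing Implicit Defensive.
Import Order.TTheory GRing.Theory Num.Theory.
Import numFieldNormedType.Exports.
Local Open Scope classical_set_scope.
Local Open Scope ring_scope.

Section Defs.
Variables (R : realType) (X : normedModType R).

Definition unit_ball : set X := [set x | `|x| <= 1].
Definition unit_sphere : set X := [set x | `|x| = 1].

Definition rad (F : set X) (x : X) : R := sup [set `|x - y| | y in F].

Definition farthest (F : set X) (x : X) : set X :=
  [set y | F y /\ `|x - y| = rad F x].

Definition gen_diam (A B : set X) : R :=
  sup [set `|a - b| | a in A & b in B].

Definition rotund : Prop :=
  forall x1 x2 : X, `|x1| = 1 -> `|x2| = 1 -> x1 <> x2 ->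
    `|(2%:R)^-1 *: (x1 + x2)| < 1.
End Defs.
Arguments rotund R X : clear implicits.
Arguments unit_ball R X : clear implicits.
Arguments unit_sphere R X : clear implicits.

From Pilot Require Import Defs.
From HB Require Import structures.
From mathcomp Require Import all_boot all_order all_algebra.
From mathcomp Require Import all_classical all_reals all_analysis.
From mathcomp Require Import lra.
Set Implicit Arguments. Unset Strict Implicit. Unset Printing Implicit Defensive.
Import Order.TTheory GRing.Theory Num.Theory.
Import numFieldNormedType.Exports.
Local Open Scope classical_set_scope.
Local Open Scope ring_scope.

(* For x on the unit sphere, -x lies at distance 2 from x and nothing in the
   unit ball lies farther, so Q_B(x) and Q_S(x) are both the set of unit
   vectors at distance 2 from x, the antipodes of x. Rotundity says exactly
   that -x is the only antipode, and then both generalized diameters equal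
   ||x1 - x2||. Conversely, if x1 <> x2 are unit vectors with
   ||x1 + x2|| = 2, the whole segment [x1, x2] lies on the sphere; for its
   midpoint m, x2 is an antipode of -x1 and x1 is an antipode of -m, so
   r(Q(-x1), Q(-m)) >= ||x1 - x2|| > ||x1 - x2|| / 2 = ||-x1 - -m||. *)

Lemma sup_eq_max (R : realType) (E : set R) (c : R) :
  E c -> ubound E c -> sup E = c.
Proof.
move=> Ec ubc; apply/le_anti/andP; split.
  by apply: ge_sup => //; exists c.
by apply: ub_le_sup => //; exists c.
Qed.

Section Rotund.
Variables (R : realType) (X : normedModType R).

Definition antipodes (x : X) : set X := [set y | `|y| = 1 /\ `|x - y| = 2].

Lemma unit_sphere_sub_ball : unit_sphere R X `<=` unit_ball R X.
Proof. by move=> x; rewrite /unit_sphere /unit_ball /= => ->. Qed.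

Lemma antipodes_sub_ball (x : X) : antipodes x `<=` unit_ball R X.
Proof. by move=> y [hy _]; rewrite /unit_ball /= hy. Qed.

Lemma normZ_half (v : X) : `|2^-1 *: v| = `|v| / 2.
Proof. by rewrite normrZ ger0_norm ?invr_ge0 ?ler0n // mulrC. Qed.

Lemma dist_oppr (x : X) : `|x - - x| = `|x| *+ 2.
Proof. by rewrite opprK -mulr2n normrMn. Qed.

Lemma dist_le2 (x y : X) : `|x| <= 1 -> `|y| <= 1 -> `|x - y| <= 2.
Proof.
move=> hx hy; apply: (le_trans (ler_normB _ _)).
by rewrite -[2]/(1 + 1); apply: lerD.
Qed.

Lemma rad_unit (F : set X) (x : X) :
  F `<=` unit_ball R X -> F (- x) -> `|x| = 1 -> Defs.rad F x = 2.
Proof.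
move=> FB Fx hx; apply: sup_eq_max; first by exists (- x); rewrite ?dist_oppr ?hx.
by move=> _ [y Fy <-]; apply: dist_le2; rewrite ?hx //; apply: FB.
Qed.

Lemma farthest_unit (F : set X) (x : X) :
  unit_sphere R X `<=` F -> F `<=` unit_ball R X -> `|x| = 1 ->
  farthest F x = antipodes x.
Proof.
move=> SF FB hx; rewrite /farthest rad_unit //; last first.
  by apply: SF; rewrite /unit_sphere /= normrN.
apply/seteqP; split=> y /= [Fy dxy]; split=> //; last exact: SF.
have yB : `|y| <= 1 := FB _ Fy.
by apply/le_anti; rewrite yB /=; have := ler_normB x y; rewrite dxy hx; lra.
Qed.

Lemma gen_diam_ge (A B : set X) (a b : X) :
  A `<=` unit_ball R X -> B `<=` unit_ball R X -> A a -> B b ->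
  `|a - b| <= gen_diam A B.
Proof.
move=> AB BB Aa Bb; apply: ub_le_sup; last by exists a => //; exists b.
by exists 2 => _ [a' Aa' [b' Bb' <-]]; apply: dist_le2; [apply: AB | apply: BB].
Qed.

Lemma rotundP : rotund R X <->
  (forall x1 x2 : X, `|x1| = 1 -> `|x2| = 1 -> `|x1 + x2| = 2 -> x1 = x2).
Proof.
split=> [rot x1 x2 h1 h2 hs | H x1 x2 h1 h2 ne].
  case: (eqVneq x1 x2) => // /eqP ne.
  by have := rot x1 x2 h1 h2 ne; rewrite normZ_half hs divff ?ltxx.
rewrite normZ_half ltr_pdivrMr // mul1r ltNge; apply/negP => hge; apply: ne.
apply: H => //; apply/le_anti; rewrite hge andbT.
by rewrite -[2]/(1 + 1) -{1}h1 -h2 ler_normD.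
Qed.

Lemma antipodes_rotund (x : X) :
  rotund R X -> `|x| = 1 -> antipodes x = [set - x].
Proof.
move=> /rotundP rot hx; apply/seteqP; split=> y /=.
  by move=> [hy hd]; rewrite -[y]opprK -(rot x (- y)) ?normrN.
by move=> ->; split; rewrite ?normrN ?dist_oppr hx.
Qed.

Lemma gen_diam_antipodes_rotund (x1 x2 : X) : rotund R X ->
  `|x1| = 1 -> `|x2| = 1 -> gen_diam (antipodes x1) (antipodes x2) = `|x1 - x2|.
Proof.
move=> rot h1 h2; rewrite /gen_diam !antipodes_rotund //.
have dN : `|- x1 - - x2| = `|x1 - x2| by rewrite opprK addrC distrC.
apply: sup_eq_max => [|_ [_ -> [_ -> <-]]]; last by rewrite dN.
by exists (- x1) => //; exists (- x2).
Qed.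

Lemma normZD_eq (s t : R) (a b : X) : 0 <= t <= s ->
  `|a + b| = `|a| + `|b| -> `|s *: a + t *: b| = s * `|a| + t * `|b|.
Proof.
move=> /andP[t0 ts] hab; have s0 : 0 <= s := le_trans t0 ts.
apply/le_anti/andP; split.
  by apply: le_trans (ler_normD _ _) _; rewrite !normrZ !ger0_norm.
have -> : s *: a + t *: b = s *: (a + b) - (s - t) *: b.
  by rewrite scalerBl scalerDr opprB addrACA subrr addr0.
apply: le_trans (lerB_dist _ _); rewrite !normrZ hab !ger0_norm ?subr_ge0 //.
by rewrite mulrDr mulrBl opprB addrACA subrr addr0.
Qed.

Lemma rotund_of_gen_diam_antipodes :
  (forall x1 x2 : X, `|x1| = 1 -> `|x2| = 1 -> x1 <> x2 ->
     gen_diam (antipodes x1) (antipodes x2) = `|x1 - x2|) -> rotund R X.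
Proof.
move=> H; apply/rotundP => x1 x2 h1 h2 hs.
case: (eqVneq x1 x2) => // /eqP ne; exfalso.
have seg : `|x1 + x2| = `|x1| + `|x2| by rewrite h1 h2 hs.
pose m := 2^-1 *: (x1 + x2).
have hm : `|m| = 1 by rewrite normZ_half hs divff.
have hmx1 : `|m + x1| = 2.
  have -> : m + x1 = (1 + 2^-1) *: x1 + 2^-1 *: x2.
    by rewrite /m scalerDr scalerDl scale1r addrAC; congr (_ + _); apply: addrC.
  by rewrite normZD_eq ?h1 ?h2 //; lra.
have hmB : `|m - x1| = `|x2 - x1| / 2.
  have x1_half : x1 = 2^-1 *: x1 + 2^-1 *: x1.
    by rewrite -scalerDl (_ : 2^-1 + 2^-1 = 1) ?scale1r //; lra.
  rewrite -normZ_half /m [in X in _ - X]x1_half scalerDr scalerBr opprD.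
  by rewrite addrACA subrr add0r.
have far2 : antipodes (- x1) x2 by split; rewrite // -opprD normrN.
have far1 : antipodes (- m) x1 by split; rewrite // -opprD normrN.
have dpos : 0 < `|x2 - x1| by rewrite normr_gt0 subr_eq0 eq_sym; apply/eqP.
have := gen_diam_ge (@antipodes_sub_ball _) (@antipodes_sub_ball _) far2 far1.
rewrite H ?normrN //; last first.
  move=> /oppr_inj x1m; move: hmB; rewrite -x1m subrr normr0; lra.
by rewrite opprK [- x1 + _]addrC hmB; lra.
Qed.

Lemma rotund_iff_gen_diam_farthest (F : set X) :
  unit_sphere R X `<=` F -> F `<=` unit_ball R X ->
  (rotund R X <-> forall x1 x2 : X, unit_sphere R X x1 -> unit_sphere R X x2 ->
     gen_diam (farthest F x1) (farthest F x2) = `|x1 - x2|)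
  /\ (rotund R X <-> forall x1 x2 : X, unit_sphere R X x1 -> unit_sphere R X x2 ->
     x1 <> x2 -> gen_diam (farthest F x1) (farthest F x2) = `|x1 - x2|).
Proof.
move=> SF FB; have farF x : `|x| = 1 -> farthest F x = antipodes x.
  exact: farthest_unit.
split; split.
- by move=> rot x1 x2 h1 h2; rewrite !farF //; apply: gen_diam_antipodes_rotund.
- by move=> H; apply: rotund_of_gen_diam_antipodes => x1 x2 h1 h2 _; rewrite -!farF ?H.
- by move=> rot x1 x2 h1 h2 _; rewrite !farF //; apply: gen_diam_antipodes_rotund.
- by move=> H; apply: rotund_of_gen_diam_antipodes => x1 x2 h1 h2 ne; rewrite -!farF ?H.
Qed.

End Rotund.

Theorem theorem3p3 (R : realType) (X : completeNormedModType R) :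
  [/\ (rotund R X <->
        (forall x1 x2 : X, unit_sphere R X x1 -> unit_sphere R X x2 ->
          gen_diam (farthest (unit_ball R X) x1) (farthest (unit_ball R X) x2)
          = `|x1 - x2|)),
      (rotund R X <->
        (forall x1 x2 : X, unit_sphere R X x1 -> unit_sphere R X x2 ->
          gen_diam (farthest (unit_sphere R X) x1) (farthest (unit_sphere R X) x2)
          = `|x1 - x2|)) &
      (rotund R X <->
        (forall x1 x2 : X, unit_sphere R X x1 -> unit_sphere R X x2 -> x1 <> x2 ->
          gen_diam (farthest (unit_sphere R X) x1) (farthest (unit_sphere R X) x2)
          = `|x1 - x2|))].
Proof.
have [ball_iff _] :=
  rotund_iff_gen_diam_farthest (@unit_sphere_sub_ball R X) (@subset_refl _ _).
have [sphere_iff sphere_neq_iff] :=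
  rotund_iff_gen_diam_farthest (@subset_refl _ _) (@unit_sphere_sub_ball R X).
by split.
Qed.
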